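(* Let $q\equiv 3\pmod 4$ be a prime power, let $P=\{(x,y,z)\in\mathbb{F}_q^3 : z=x^2+y^2\}$, and let $a,b,c,d\in P$. Then $a+b=c+d$ if and only if $\underline{a},\underline{c},\underline{b},\underline{d}$ (in this cyclic order) form a rectangle in $\mathbb{F}_q^2$.
   Context: Every point of $P$ is written as $x=(\underline{x},\underline{x}\cdot\underline{x})$ with $\underline{x}\in\mathbb{F}_q^2$, where $u\cdot v=u_1v_1+u_2v_2$. Four points $x,z,y,t\in\mathbb{F}_q^2$ form a rectangle with vertices in the cyclic order $x,z,y,t$ if $(x-z)\cdot(y-z)=0$, $(z-y)\cdot(t-y)=0$, $(y-t)\cdot(x-t)=0$ and $(t-x)\cdot(z-x)=0$ (right angles at every vertex). *)

From HB Require Import structures.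
From mathcomp Require Import all_boot all_order all_algebra all_field.
Set Implicit Arguments. Unset Strict Implicit. Unset Printing Implicit Defensive.
Import GRing.Theory.
Local Open Scope ring_scope.

Definition dot2 (F : fieldType) (u v : 'rV[F]_2) : F :=
  u 0 0 * v 0 0 + u 0 1 * v 0 1.

Definition inP (F : fieldType) (a : 'rV[F]_3) : Prop :=
  a 0 2%:R = a 0 0 ^+ 2 + a 0 1 ^+ 2.

Definition under (F : fieldType) (a : 'rV[F]_3) : 'rV[F]_2 :=
  \row_(i < 2) a 0 (widen_ord (isT : (2 <= 3)%N) i).

Definition rectangle (F : fieldType) (x z y t : 'rV[F]_2) : Prop :=
  [/\ dot2 (x - z) (y - z) = 0, dot2 (z - y) (t - y) = 0,
      dot2 (y - t) (x - t) = 0 & dot2 (t - x) (z - x) = 0].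

From HB Require Import structures.
From mathcomp Require Import all_boot all_order all_algebra all_field.
From mathcomp Require Import ring.
Set Implicit Arguments. Unset Strict Implicit. Unset Printing Implicit Defensive.
Import GRing.Theory.
Local Open Scope ring_scope.

(* Write x, z, y, t for the projections of a, c, b, d. When x + y = z + t, the four
   corner products of x z y t agree up to sign, and twice one of them is the defect |z|^2 + |t|^2 - |x|^2 - |y|^2 of the third
   coordinates; since q is odd, a + b = c + d and "rectangle" thus coincide on
   parallelograms. Conversely, the corner products of any quadrilateral sum to
   |x + y - z - t|^2, and for q = 3 mod 4 the form u^2 + v^2 is anisotropic because -1
   is not a square, so every rectangle is a parallelogram. *)

Section Plane.

Variable F : fieldType.
Implicit Types x y z t : 'rV[F]_2.

Definition norm2 x := dot2 x x.

Lemma rectangle_dot2_sum x z y t :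
  dot2 (x - z) (y - z) + dot2 (z - y) (t - y) + dot2 (y - t) (x - t)
    + dot2 (t - x) (z - x) = norm2 (x + y - z - t).
Proof. by rewrite /norm2 /dot2 !mxE; ring. Qed.

Lemma parallelogram_rectangleE x z y t : x + y = z + t ->
  rectangle x z y t <-> dot2 (x - z) (y - z) = 0.
Proof.
move=> xyzt; have -> : t = x + y - z by rewrite xyzt addrC addKr.
rewrite /rectangle.
have -> : dot2 (z - y) (x + y - z - y) = - dot2 (x - z) (y - z) by rewrite /dot2 !mxE; ring.
have -> : dot2 (y - (x + y - z)) (x - (x + y - z)) = dot2 (x - z) (y - z) by rewrite /dot2 !mxE; ring.
have -> : dot2 (x + y - z - x) (z - x) = - dot2 (x - z) (y - z) by rewrite /dot2 !mxE; ring.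
by split=> [[]|D] //; rewrite D oppr0.
Qed.

Lemma parallelogram_norm2E x z y t : 2%:R != 0 :> F -> x + y = z + t ->
  norm2 x + norm2 y = norm2 z + norm2 t <-> dot2 (x - z) (y - z) = 0.
Proof.
move=> two_neq0 xyzt; have -> : t = x + y - z by rewrite xyzt addrC addKr.
have -> : norm2 z + norm2 (x + y - z) = norm2 x + norm2 y + 2%:R * dot2 (x - z) (y - z).
  by rewrite /norm2 /dot2 !mxE; ring.
rewrite -[X in X = _ <-> _]addr0; split => [/addrI/esym/eqP|->]; last by rewrite mulr0.
by rewrite mulf_eq0 (negbTE two_neq0) => /eqP.
Qed.

End Plane.

Section Anisotropic.

Variable F : fieldType.
Hypothesis sqr_neqN1 : forall i : F, i ^+ 2 != -1.

Lemma sqr_add_sqr_eq0 (u v : F) : (u ^+ 2 + v ^+ 2 == 0) = (u == 0) && (v == 0).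
Proof.
have [->|v_neq0] := eqVneq v 0; first by rewrite expr0n addr0 sqrf_eq0 andbT.
rewrite andbF; apply/negP => /eqP uv0; move/eqP: (sqr_neqN1 (u / v)); apply.
by rewrite expr_div_n -[u ^+ 2](addrK (v ^+ 2)) uv0 sub0r mulNr divff ?expf_neq0.
Qed.

Lemma norm2_eq0 (x : 'rV[F]_2) : (norm2 x == 0) = (x == 0).
Proof.
rewrite /norm2 /dot2 -!expr2 sqr_add_sqr_eq0; apply/andP/eqP => [[/eqP x0 /eqP x1]|->].
  apply/rowP => -[[|[|//]] j2]; rewrite mxE; [rewrite -x0 | rewrite -x1];
    by congr (x 0 _); apply/val_inj.
by rewrite !mxE.
Qed.

Lemma rectangle_parallelogram (x z y t : 'rV[F]_2) :
  rectangle x z y t -> x + y = z + t.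
Proof.
case=> D1 D2 D3 D4; apply/eqP; rewrite -subr_eq0 opprD addrA -norm2_eq0.
by rewrite -rectangle_dot2_sum D1 D2 D3 D4 !addr0.
Qed.

End Anisotropic.

Lemma modn4_3_odd n : (n %% 4 = 3)%N -> odd n.
Proof. by move=> n3; rewrite -(odd_mod _ (erefl : odd 4 = false)) n3. Qed.

Lemma natr2_neq0_odd_card (F : finFieldType) : odd #|F| -> 2%:R != 0 :> F.
Proof.
move=> oddF; apply/eqP => two0.
have pchar2 : (2 \in [pchar F])%N by rewrite inE /= two0 eqxx.
have cardF : #|F| = (2 ^ logn 2 #|F|)%N := card_pprimeChar pchar2.
have : (1 < #|F|)%N by apply/card_gt1P; exists 0, 1; rewrite !inE eq_sym oner_eq0.
by move: oddF; rewrite cardF oddX orbF => /eqP ->.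
Qed.

Lemma sqr_neqN1_card_mod4 (F : finFieldType) :
  (#|F| %% 4 = 3)%N -> forall i : F, i ^+ 2 != -1.
Proof.
move=> card3 i; apply/eqP => i2.
have two_neq0 : 2%:R != 0 :> F := natr2_neq0_odd_card (modn4_3_odd card3).
have i4 : i ^+ 4 = 1 by rewrite (exprM i 2 2) i2 sqrrN expr1n.
have iN : i = - i.
  rewrite -{1}(expf_card i) (divn_eq #|F| 4) card3 exprD mulnC exprM i4 expr1n mul1r.
  by rewrite exprS i2 mulrN1.
have i0 : i = 0.
  apply/eqP; have : 2%:R * i == 0 by rewrite mulr_natl mulr2n addr_eq0 -iN.
  by rewrite mulf_eq0 (negbTE two_neq0).
by move/eqP: i2; rewrite i0 expr0n /= eq_sym oppr_eq0 oner_eq0.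
Qed.

Section Paraboloid.

Variable F : fieldType.
Implicit Types a b c d : 'rV[F]_3.

Lemma underD a b : under (a + b) = under a + under b.
Proof. by apply/rowP => j; rewrite !mxE. Qed.

Lemma underE a : (under a 0 0 = a 0 0) * (under a 0 1 = a 0 1).
Proof. by rewrite !mxE; split; congr (a 0 _); apply/val_inj. Qed.

Lemma inP_norm2 a : inP a -> a 0 2%:R = norm2 (under a).
Proof. by rewrite /norm2 /dot2 !underE -!expr2. Qed.

Lemma eq_row3_under a b : a = b <-> under a = under b /\ a 0 2%:R = b 0 2%:R.
Proof.
split=> [-> // | [/rowP ab ab2]]; apply/rowP => -[[|[|[|//]]] j3].
- by have := ab 0; rewrite !underE; congr (a 0 _ = b 0 _); apply/val_inj.
- by have := ab 1; rewrite !underE; congr (a 0 _ = b 0 _); apply/val_inj.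
- by rewrite (_ : Ordinal j3 = 2%:R) //; apply/val_inj.
Qed.

Lemma paraboloid_addE a b c d : inP a -> inP b -> inP c -> inP d ->
  a + b = c + d <->
  under a + under b = under c + under d
  /\ norm2 (under a) + norm2 (under b) = norm2 (under c) + norm2 (under d).
Proof.
move=> ha hb hc hd; rewrite eq_row3_under !underD !mxE.
by rewrite (inP_norm2 ha) (inP_norm2 hb) (inP_norm2 hc) (inP_norm2 hd).
Qed.

End Paraboloid.

Theorem lemma2p1 (F : finFieldType) (hq : (#|F| %% 4 = 3)%N)
    (a b c d : 'rV[F]_3) (ha : inP a) (hb : inP b) (hc : inP c) (hd : inP d) :
  a + b = c + d <-> rectangle (under a) (under c) (under b) (under d).
Proof.
have two_neq0 : 2%:R != 0 :> F := natr2_neq0_odd_card (modn4_3_odd hq).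
rewrite paraboloid_addE //; split=> [[para norm2_eq] | rect].
  by apply/(parallelogram_rectangleE para)/(parallelogram_norm2E two_neq0 para).
have para := rectangle_parallelogram (sqr_neqN1_card_mod4 hq) rect.
by split=> //; apply/(parallelogram_norm2E two_neq0 para); case: rect.
Qed.
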